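(* Let $\mathcal{F}=\{f_1,\dots,f_{M_1}\}$ be a collection of polynomials on $\mathbb{R}^n$ satisfying property $R$. For $\varpi\in\mathbb{R}^n$ let $P^\varpi(z)=z-\varpi$. Then for any probability measure $\mu$ on $\mathbb{R}^n$, $\mu\in\mathbb{M}^{pc}_{\mathcal{F}}(\varpi)$ if and only if $(P^\varpi)_\sharp\mu\in\mathbb{M}^{pc}_{\mathcal{F}}(0)$.
   Context: $\mathcal{L}(\mathcal{F})=\{\sum_i\lambda_if_i+\lambda_0:f_i\in\mathcal{F},\lambda_i\in\mathbb{R}\}$; $\mathcal{F}$ satisfies property $R$ if $z\mapsto f(z-z_0)$ lies in $\mathcal{L}(\mathcal{F})$ for every $f\in\mathcal{F}$ and $z_0\in\mathbb{R}^n$. $\mathbb{M}^{pc}_{\mathcal{F}}(\varpi)$ is the set of probability measures $\mu$ on $\mathbb{R}^n$ with $\int z\,d\mu=\varpi$ and $\int f\,d\mu=f(\int z\,d\mu)$ for all $f\in\mathcal{F}$. $(P^\varpi)_\sharp\mu$ denotes the push-forward of $\mu$ under $P^\varpi$. *)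

From HB Require Import structures.
From mathcomp Require Import all_boot all_order all_algebra.
From mathcomp Require Import all_classical all_reals all_analysis measurable_realfun.
From mathcomp Require mpoly.

Set Implicit Arguments.
Unset Strict Implicit.
Unset Printing Implicit Defensive.
Import Order.TTheory GRing.Theory Num.Theory.
Local Open Scope classical_set_scope.
Local Open Scope ring_scope.

(* R^n is modelled as n.-tuple R, with its canonical product (Borel)
   sigma-algebra from mathcomp-analysis. *)

Definition tsub (R : realType) (n : nat) (z w : n.-tuple R) : n.-tuple R :=
  [tuple tnth z i - tnth w i | i < n].

Definition tzero (R : realType) (n : nat) : n.-tuple R := [tuple (0:R) | _ < n].

Definition peval (R : realType) (n : nat) (p : mpoly.mpoly n R) (z : n.-tuple R) : R :=
  mpoly.meval (fun i => tnth z i) p.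

Definition in_affine_span (R : realType) (n M : nat) (F : 'I_M -> mpoly.mpoly n R)
    (g : n.-tuple R -> R) : Prop :=
  exists (lam : 'I_M -> R) (lam0 : R),
    forall z, g z = \sum_(i < M) lam i * peval (F i) z + lam0.

Definition propR (R : realType) (n M : nat) (F : 'I_M -> mpoly.mpoly n R) : Prop :=
  forall (k : 'I_M) (z0 : n.-tuple R),
    in_affine_span F (fun z => peval (F k) (tsub z z0)).

Definition Pw (R : realType) (n : nat) (w : n.-tuple R) : n.-tuple R -> n.-tuple R :=
  fun z => tsub z w.

Lemma measurable_Pw (R : realType) (n : nat) (w : n.-tuple R) :
  measurable_fun [set: n.-tuple R] (Pw w).
Proof.
apply/measurable_fun_tnthP => i /=.
have -> : (@tnth n R)^~ i \o Pw w = (fun z => tnth z i - tnth w i).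
  by apply/funext => z /=; rewrite /Pw /tsub tnth_map tnth_ord_tuple.
apply: measurable_funB; first exact: measurable_tnth.
exact: measurable_cst.
Qed.

Definition push_Pw (R : realType) (n : nat) (w : n.-tuple R)
    (mu : set (n.-tuple R) -> \bar R) : set (n.-tuple R) -> \bar R :=
  pushforward mu (Pw w).

Section push_Pw_measure.
Local Open Scope ereal_scope.
Context (R : realType) (n : nat) (w : n.-tuple R)
        (mu : {measure set (n.-tuple R) -> \bar R}).

Let mf := measurable_Pw w.

Let push0 : push_Pw w mu set0 = 0.
Proof. by rewrite /push_Pw /pushforward preimage_set0 measure0. Qed.

Let push_ge0 A : 0 <= push_Pw w mu A.
Proof. by rewrite /push_Pw /pushforward; apply: measure_ge0; rewrite -[X in measurable X]setIT; apply: mf. Qed.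

Let push_sigma_additive : semi_sigma_additive (push_Pw w mu).
Proof.
move=> F mF tF mUF; rewrite /push_Pw /pushforward preimage_bigcup.
apply: measure_semi_sigma_additive.
- by move=> k; rewrite -[X in measurable X]setTI; exact: mf.
- apply/trivIsetP => /= i j _ _ ij; rewrite -preimage_setI.
  by move/trivIsetP : tF => /(_ _ _ _ _ ij) ->//; rewrite preimage_set0.
- by rewrite -preimage_bigcup -[X in measurable X]setTI; exact: mf.
Qed.

HB.instance Definition _ := isMeasure.Build _ _ _
  (push_Pw w mu) push0 push_ge0 push_sigma_additive.

End push_Pw_measure.

(* mu \in M^pc_F(varpi): mu is a probability measure, its coordinates are
   integrable with  \int z dmu = varpi, and every f in F is integrable with
   \int f dmu = f(\int z dmu) = f(varpi). *)
Definition Mpc (R : realType) (n M : nat) (F : 'I_M -> mpoly.mpoly n R)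
    (w : n.-tuple R) (mu : {measure set (n.-tuple R) -> \bar R}) : Prop :=
  mu setT = 1%E /\
  (forall i : 'I_n, mu.-integrable setT (fun z => (tnth z i)%:E) /\
     (\int[mu]_z (tnth z i)%:E = (tnth w i)%:E)%E) /\
  (forall k : 'I_M, mu.-integrable setT (fun z => (peval (F k) z)%:E) /\
     (\int[mu]_z (peval (F k) z)%:E = (peval (F k) w)%:E)%E).

From HB Require Import structures.
From mathcomp Require Import all_boot all_order all_algebra.
From mathcomp Require Import all_classical all_reals all_analysis.
From mathcomp Require Import measurable_realfun.
From mathcomp Require mpoly.

Set Implicit Arguments.
Unset Strict Implicit.
Unset Printing Implicit Defensive.
Import Order.TTheory GRing.Theory Num.Theory.
Local Open Scope classical_set_scope.
Local Open Scope ring_scope.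

(* Translation by [w] is affine on the coordinates and, by property R, maps
   every [f] in [F] into the affine span of [F]. Integration against a
   probability measure commutes with affine combinations, so the moment
   conditions of [mu] at [w] become those of the law of [z - w] at [0];
   translating by [0 - w] goes back. Change of variables identifies the
   integrals against the push-forward with integrals against [mu]. *)

Definition has_mean d (T : measurableType d) (R : realType)
    (mu : set T -> \bar R) (f : T -> R) (c : R) : Prop :=
  mu.-integrable setT (fun z => (f z)%:E) /\ (\int[mu]_z (f z)%:E = c%:E)%E.

Section has_mean.
Local Open Scope ereal_scope.
Context d (T : measurableType d) (R : realType).

Lemma has_mean_affine (mu : probability T R) M (g : 'I_M -> T -> R)
    (c lam : 'I_M -> R) (lam0 : R) :
  (forall i, has_mean mu (g i) (c i)) ->
  has_mean mu (fun z => \sum_(i < M) lam i * g i z + lam0)%R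
    (\sum_(i < M) lam i * c i + lam0)%R.
Proof.
move=> hg; rewrite /has_mean.
have intg i : mu.-integrable setT (fun z => (lam i)%:E * (g i z)%:E).
  by apply: integrableZl => //; case: (hg i).
have -> : (fun z => (\sum_(i < M) lam i * g i z + lam0)%R%:E) =
    (fun z => \sum_(i < M) (lam i)%:E * (g i z)%:E) \+ cst lam0%:E.
  by apply/funext => z /=; rewrite EFinD -sumEFin.
have intc : mu.-integrable setT (cst lam0%:E).
  exact: finite_measure_integrable_cst.
split; first by apply: integrableD => //; exact: integrable_sum.
rewrite integralD //=; last exact: integrable_sum.
rewrite integral_cst //= probability_setT mule1 integral_sum //.
rewrite EFinD -sumEFin; congr (_ + _); apply: eq_bigr => i _.
by rewrite integralZl //; [case: (hg i) => _ -> | case: (hg i)].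
Qed.

Lemma has_mean_addr (mu : probability T R) f c a :
  has_mean mu f c -> has_mean mu (fun z => f z + a)%R (c + a)%R.
Proof.
move=> hf.
have := @has_mean_affine mu 1 (fun _ => f) (fun _ => c) (fun _ => 1%R) a.
by rewrite big_ord1 mul1r; under eq_fun do rewrite big_ord1 mul1r; apply.
Qed.

Lemma has_mean_pushforward d' (Y : measurableType d')
    (mu : {measure set T -> \bar R}) (phi : T -> Y) (h : Y -> R) c :
  measurable_fun setT phi -> measurable_fun setT h ->
  has_mean (pushforward mu phi) h c <-> has_mean mu (h \o phi) c.
Proof.
move=> mphi /measurable_EFinP mh; rewrite /has_mean.
have mhphi : measurable_fun setT (fun z => (h (phi z))%:E).
  exact: measurableT_comp mh mphi.
suff intE : (pushforward mu phi).-integrable setT (fun z => (h z)%:E) <->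
    mu.-integrable setT (fun z => (h (phi z))%:E).
  split=> -[/[dup] hint /intE hint' <-]; split=> //;
    by rewrite integral_pushforward.
split=> /integrableP[_ hfin]; apply/integrableP; split=> //.
- by move: hfin; rewrite ge0_integral_pushforward //; exact: measurableT_comp.
- by rewrite ge0_integral_pushforward //; exact: measurableT_comp.
Qed.

End has_mean.

Section tuple_sub.
Context (R : realType) (n : nat).
Implicit Types (z w : n.-tuple R).

Lemma tnth_tsub z w i : tnth (tsub z w) i = tnth z i - tnth w i.
Proof. by rewrite /tsub tnth_map tnth_ord_tuple. Qed.

Lemma tnth_tzero i : tnth (tzero R n) i = 0.
Proof. by rewrite /tzero tnth_map. Qed.

Lemma tsubrr w : tsub w w = tzero R n.
Proof. by apply: eq_from_tnth => i; rewrite tnth_tsub tnth_tzero subrr. Qed.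

Lemma tsub0K w : tsub (tzero R n) (tsub (tzero R n) w) = w.
Proof.
by apply: eq_from_tnth => i; rewrite !tnth_tsub tnth_tzero !sub0r opprK.
Qed.

Lemma tsubK z w : tsub (tsub z w) (tsub (tzero R n) w) = z.
Proof.
by apply: eq_from_tnth => i; rewrite !tnth_tsub tnth_tzero sub0r opprK subrK.
Qed.

End tuple_sub.

Lemma measurable_peval (R : realType) (n : nat) (p : mpoly.mpoly n R) :
  measurable_fun setT (peval p).
Proof.
rewrite /peval; under eq_fun do rewrite mpoly.mevalE.
apply: measurable_sum => m; apply: measurable_funM; first exact: measurable_cst.
apply: measurable_prod => i _; apply: measurable_funX; exact: measurable_tnth.
Qed.

(* The conditions of [Mpc F v] for the law of [g] under [mu]. *)
Definition moment_conds d (T : measurableType d) (R : realType) (n M : nat)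
    (F : 'I_M -> mpoly.mpoly n R) (mu : set T -> \bar R) (g : T -> n.-tuple R)
    (v : n.-tuple R) : Prop :=
  (forall i, has_mean mu (fun z => tnth (g z) i) (tnth v i)) /\
  (forall k, has_mean mu (fun z => peval (F k) (g z)) (peval (F k) v)).

Section moment_conditions.
Context d (T : measurableType d) (R : realType) (n M : nat)
  (F : 'I_M -> mpoly.mpoly n R).

Lemma moment_conds_tsub (mu : probability T R) g v z0 : propR F ->
  moment_conds F mu g v -> moment_conds F mu (fun z => tsub (g z) z0) (tsub v z0).
Proof.
move=> hR [hc hf]; split=> [i|k].
  rewrite tnth_tsub; under eq_fun do rewrite tnth_tsub.
  exact: has_mean_addr.
have [lam [lam0 hl]] := hR k z0.
rewrite hl; under eq_fun do rewrite hl.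
exact: has_mean_affine.
Qed.

Lemma moment_conds_pushforward (mu : {measure set T -> \bar R})
    (phi : T -> n.-tuple R) v : measurable_fun setT phi ->
  moment_conds F (pushforward mu phi) id v <-> moment_conds F mu phi v.
Proof.
move=> mphi.
have coordE i := has_mean_pushforward mu (tnth v i) mphi (measurable_tnth i).
have pevalE k :=
  has_mean_pushforward mu (peval (F k) v) mphi (measurable_peval (F k)).
split=> -[hc hf]; split=> [i|k].
- exact: proj1 (coordE i) (hc i).
- exact: proj1 (pevalE k) (hf k).
- exact: proj2 (coordE i) (hc i).
- exact: proj2 (pevalE k) (hf k).
Qed.

End moment_conditions.

Lemma MpcE (R : realType) (n M : nat) (F : 'I_M -> mpoly.mpoly n R) w
    (mu : {measure set (n.-tuple R) -> \bar R}) :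
  Mpc F w mu <-> mu setT = 1%E /\ moment_conds F mu id w.
Proof. by []. Qed.

Local Close Scope ring_scope.
Local Close Scope classical_set_scope.
Unset Implicit Arguments.

Theorem lemma18 (R : realType) (n M1 : nat)
    (F : 'I_M1 -> mpoly.mpoly n R) (hR : propR F) (w : n.-tuple R)
    (mu : probability (n.-tuple R) R) :
  Mpc F w mu <-> Mpc F (tzero R n) (push_Pw w mu).
Proof.
have push_setT : push_Pw w mu setT = 1%E.
  by rewrite /push_Pw /pushforward preimage_setT probability_setT.
have pushE := moment_conds_pushforward F mu (tzero R n) (measurable_Pw w).
rewrite !MpcE; split=> -[_ hm]; split.
- exact: push_setT.
- by apply/pushE; rewrite -(tsubrr w); exact: moment_conds_tsub.
- exact: probability_setT.
- have := moment_conds_tsub (tsub (tzero R n) w) hR (proj1 pushE hm).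
  by rewrite tsub0K; under eq_fun do rewrite tsubK.
Qed.
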